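(* Let $n\geq 3$ and let $f(\overleftrightarrow{K}_{n})$ be the smallest integer such that every arc-colored complete digraph $\overleftrightarrow{K}_{n}$ with $c(\overleftrightarrow{K}_{n})\geq f(\overleftrightarrow{K}_{n})$ contains a rainbow triangle. Then \[f(\overleftrightarrow{K}_{n})=\begin{cases} \lfloor\frac{n^{2}}{4}\rfloor+3,&\text{if } n=3, 4;\\ \lfloor\frac{n^{2}}{4}\rfloor+2,&\text{if } n\geq 5. \end{cases}\]
   Context: All digraphs are finite, without loops or multiple arcs (a pair of opposite arcs $xy,yx$ is allowed). The complete digraph $\overleftrightarrow{K}_{n}$ is obtained from $K_n$ by replacing each edge $xy$ by the two arcs $xy$ and $yx$. An arc-coloring of a digraph $D$ is any map $C:A(D)\to\mathbb{N}$; $c(D)$ denotes the number of distinct colors used on the arcs of $D$. A rainbow triangle is a directed triangle (directed cycle of length 3) whose three arcs have pairwise distinct colors. *)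

From mathcomp Require Import all_boot.
Set Implicit Arguments. Unset Strict Implicit. Unset Printing Implicit Defensive.

(* The complete digraph K_n <-> has vertex set 'I_n and arc set
   {(x,y) | x != y}.  An arc-colouring is any map assigning a natural number
   to each arc; we represent it as C : 'I_n -> 'I_n -> nat, whose values on
   the (non-arc) diagonal pairs (x,x) are ignored. *)
Definition arc_coloring (n : nat) := 'I_n -> 'I_n -> nat.

Definition num_colors (n : nat) (C : arc_coloring n) : nat :=
  size (undup [seq C p.1 p.2 | p <- enum [pred p : 'I_n * 'I_n | p.1 != p.2]]).

Definition has_rainbow_triangle (n : nat) (C : arc_coloring n) : Prop :=
  exists x y z : 'I_n,
    [/\ x != y, y != z, z != x &
        [/\ C x y != C y z, C y z != C z x & C z x != C x y]].

Definition forces_rainbow (n k : nat) : Prop :=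
  forall C : arc_coloring n, k <= num_colors C -> has_rainbow_triangle C.

Definition is_f_Kn (n k : nat) : Prop :=
  forces_rainbow n k /\ forall j : nat, forces_rainbow n j -> k <= j.

From mathcomp Require Import all_boot perm zify.
Set Implicit Arguments. Unset Strict Implicit. Unset Printing Implicit Defensive.

(* Call a colour private to a vertex v if all its arcs are incident with v: these
   are the colours lost when v is deleted.  In a colouring without rainbow
   triangle, a vertex carrying private colours both on out-arcs and on in-arcs
   has at most two of them.  Otherwise, if every vertex has more than n/2 >= 2
   private colours, the vertices split into those whose private colours lie only
   on out-arcs and those whose private colours lie only on in-arcs, and the
   private out-neighbours (in-neighbours) of a vertex of the first (second) kind
   are of the other kind; so each vertex has at most as many private colours as
   the other class has vertices, and the smaller class has at most n/2 vertices.
   Hence for n >= 4 some vertex has at most n/2 private colours; deleting it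
   bounds the number of colours by the bound for n - 1 plus n/2, which is the
   claimed bound for every n >= 4 except n = 5.  The cases n = 3 and n = 5 are
   settled by an exhaustive search over colourings up to renaming of the colours;
   for n = 5 the search may assume that the vertices other than one with at most
   two private colours already carry six colours.
   The lower bounds come from explicit colourings; for n >= 5 the arcs from the
   first half of the vertices to the second half get distinct colours and all
   other arcs one common colour. *)

Definition arc_colors n (C : arc_coloring n) : seq nat :=
  [seq C p.1 p.2 | p <- enum [pred p : 'I_n * 'I_n | p.1 != p.2]].

Lemma arc_colorsP n (C : arc_coloring n) c :
  reflect (exists x y, x != y /\ c = C x y) (c \in arc_colors C).
Proof.
apply: (iffP mapP) => [[[x y]]|[x [y [xy ->]]]]; last by exists (x, y); rewrite ?mem_enum.
by rewrite mem_enum => xy ->; exists x, y.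
Qed.

Lemma mem_arc_colors n (C : arc_coloring n) x y : x != y -> C x y \in arc_colors C.
Proof. by move=> xy; apply/arc_colorsP; exists x, y. Qed.

Lemma num_colors_le_undup n (C : arc_coloring n) (s : seq nat) :
  {subset arc_colors C <= s} -> num_colors C <= size (undup s).
Proof.
by move=> sub; apply: uniq_leq_size (undup_uniq _) _ => c; rewrite !mem_undup => /sub.
Qed.

Lemma size_le_num_colors n (C : arc_coloring n) (s : seq nat) :
  uniq s -> {subset s <= arc_colors C} -> size s <= num_colors C.
Proof. by move=> Us sub; apply: uniq_leq_size Us _ => c /sub; rewrite mem_undup. Qed.

Definition rainbow (a b c : nat) := [&& a != b, b != c & c != a].

Lemma rainbow_triangleP n (C : arc_coloring n) :
  reflect (has_rainbow_triangle C)
    [exists x, exists y, exists z,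
       [&& x != y, y != z, z != x & rainbow (C x y) (C y z) (C z x)]].
Proof.
apply: (iffP existsP) => [[x /existsP [y /existsP [z]]]|[x [y [z [xy yz zx [c1 c2 c3]]]]]].
  by case/and4P => xy yz zx /and3P [c1 c2 c3]; exists x, y, z.
by exists x; apply/existsP; exists y; apply/existsP; exists z; rewrite xy yz zx /rainbow c1 c2 c3.
Qed.

Lemma rainbow_free_eq n (C : arc_coloring n) x y z : ~ has_rainbow_triangle C ->
  x != y -> y != z -> z != x -> [|| C x y == C y z, C y z == C z x | C z x == C x y].
Proof.
move=> nR xy yz zx; apply/negPn/negP; rewrite !negb_or => /and3P [c1 c2 c3].
by apply: nR; exists x, y, z.
Qed.

Definition relabel m n (f : 'I_m -> 'I_n) (C : arc_coloring n) : arc_coloring m :=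
  fun x y => C (f x) (f y).

Lemma relabel_rainbow_free m n (f : 'I_m -> 'I_n) (C : arc_coloring n) :
  injective f -> ~ has_rainbow_triangle C -> ~ has_rainbow_triangle (relabel f C).
Proof.
move=> f_inj nR [x [y [z [xy yz zx c]]]]; apply: nR.
by exists (f x), (f y), (f z); rewrite !(inj_eq f_inj).
Qed.

Lemma num_colors_relabel_le m m' n (f : 'I_m -> 'I_n) (f' : 'I_m' -> 'I_n)
    (g : 'I_m -> 'I_m') (C : arc_coloring n) :
  injective f -> f =1 f' \o g -> num_colors (relabel f C) <= num_colors (relabel f' C).
Proof.
move=> f_inj fE; apply: num_colors_le_undup => _ /arc_colorsP [x [y [xy ->]]].
rewrite /relabel !fE; apply: (mem_arc_colors (relabel f' C)).
by apply: contraNneq xy => gxy; apply/eqP/f_inj; rewrite !fE /= gxy.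
Qed.

Definition converse n (C : arc_coloring n) : arc_coloring n := fun x y => C y x.

Lemma converse_rainbow_free n (C : arc_coloring n) :
  ~ has_rainbow_triangle C -> ~ has_rainbow_triangle (converse C).
Proof.
move=> nR [x [y [z [xy yz zx [c1 c2 c3]]]]]; apply: nR.
by exists x, z, y; split; try split; rewrite eq_sym.
Qed.

Section PrivateColors.

Variables (n : nat) (C : arc_coloring n).

Definition private (v : 'I_n) (c : nat) :=
  [forall x, forall y, (x != y) && (C x y == c) ==> (x == v) || (y == v)].

Definition private_colors v := [seq c <- arc_colors C | private v c].
Definition num_private v := size (undup (private_colors v)).

Definition private_out v := [set u | (u != v) && private v (C v u)].
Definition private_in v := [set u | (u != v) && private v (C u v)].

Lemma private_neq v c x y : private v c -> x != v -> y != v -> x != y -> C x y != c.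
Proof.
move=> /forallP /(_ x) /forallP /(_ y) + xv yv xy; apply: contraTneq => cxy.
by rewrite xy cxy eqxx (negbTE xv) (negbTE yv).
Qed.

Lemma private_colorsP v c : c \in private_colors v ->
  (exists2 u, u \in private_out v & c = C v u) \/ (exists2 w, w \in private_in v & c = C w v).
Proof.
rewrite mem_filter => /andP [pc /arc_colorsP [x [y [xy cE]]]].
move: (pc) => /forallP /(_ x) /forallP /(_ y); rewrite xy -cE eqxx /=.
case/orP => /eqP vE; subst.
  by left; exists y => //; rewrite inE eq_sym xy.
by right; exists x => //; rewrite inE xy.
Qed.

Lemma num_private_le_card v : num_private v <= #|private_out v| + #|private_in v|.
Proof.
rewrite !cardE -(size_map (C v)) -(size_map (C^~ v)) -size_cat.
apply: leq_trans (size_undup _); apply: uniq_leq_size (undup_uniq _) _ => c.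
rewrite !mem_undup mem_cat => /private_colorsP [[u uv ->]|[w wv ->]].
  by rewrite map_f ?mem_enum.
by rewrite orbC map_f ?mem_enum.
Qed.

Hypothesis nR : ~ has_rainbow_triangle C.

Lemma private_out_in_color v u w :
  u \in private_out v -> w \in private_in v -> u != w -> C v u = C w v.
Proof.
rewrite !inE => /andP [uv pu] /andP [wv pw] uw.
have := rainbow_free_eq nR (x := v) (y := u) (z := w); rewrite eq_sym uv uw wv.
case/(_ isT isT isT)/or3P => /eqP // cE.
  by move: (private_neq pu uv wv uw); rewrite cE eqxx.
by move: (private_neq pw uv wv uw); rewrite cE eqxx.
Qed.

Lemma num_private_le2 v :
  private_out v != set0 -> private_in v != set0 -> num_private v <= 2.
Proof.
move=> /set0Pn [u0 u0v] /set0Pn [w0 w0v].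
suff [a [b sub]] : exists a b, {subset private_colors v <= [:: a; b]}.
  apply: (uniq_leq_size (s2 := [:: a; b]) (undup_uniq _)) => c.
  by rewrite mem_undup => /sub.
case: (pickP [pred z | (z \in private_out v) && (z \in private_in v)]) => [z /andP [zo zi]|none].
  exists (C v z), (C z v) => c /private_colorsP [[u uv ->]|[w wv ->]].
    case: (eqVneq u z) => [-> | uz]; first exact: mem_head.
    by rewrite (private_out_in_color uv zi uz) !inE eqxx orbT.
  case: (eqVneq w z) => [-> | wz]; first by rewrite !inE eqxx orbT.
  by rewrite -(private_out_in_color zo wv) 1?eq_sym // mem_head.
have neq u w : u \in private_out v -> w \in private_in v -> u != w.
  by move=> uv wv; apply/eqP => uw; move: (none u); rewrite /= uv uw wv.
have c0 w : w \in private_in v -> C w v = C w0 v.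
  move=> wv; rewrite -(private_out_in_color u0v wv (neq _ _ u0v wv)).
  exact: private_out_in_color u0v w0v (neq _ _ u0v w0v).
exists (C w0 v), (C w0 v) => c /private_colorsP [[u uv ->]|[w wv ->]].
  by rewrite (private_out_in_color uv w0v (neq _ _ uv w0v)) mem_head.
by rewrite c0 ?mem_head.
Qed.

Lemma private_in_or_out_eq0 v :
  2 < num_private v -> (private_in v == set0) || (private_out v == set0).
Proof.
move=> big; case: (boolP (private_in v == set0)) => //= i.
by apply: contraTT big => o; rewrite -leqNgt num_private_le2.
Qed.

Lemma private_out_no_chain v w x :
  private_in v = set0 -> x \in private_out w -> x != v -> w \notin private_out v.
Proof.
move=> inv0 xw xv; apply/negP => wv.
move: (xw) (wv); rewrite !inE => /andP [xw' px] /andP [wv' pw].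
have := rainbow_free_eq nR (x := w) (y := x) (z := v); rewrite xv eq_sym xw'.
have vw : v != w by rewrite eq_sym.
case/(_ isT isT vw)/or3P => /eqP cE.
- by move: (private_neq px xw' vw xv); rewrite cE eqxx.
- have : x \in private_in v by rewrite inE xv cE.
  by rewrite inv0 inE.
- by move: (private_neq pw wv' xv); rewrite eq_sym xw' cE eqxx => /(_ isT).
Qed.

Lemma num_private_le_card_in v : (forall w, 1 < num_private w) -> private_in v = set0 ->
  num_private v <= #|[set w | private_in w != set0]|.
Proof.
move=> big inv0; apply: leq_trans (num_private_le_card v) _; rewrite inv0 cards0 addn0.
apply/subset_leq_card/subsetP => w wv; rewrite inE; apply/negP => /eqP inw0.
have gt1 : 1 < #|private_out w|.
  by apply: leq_trans (big w) _; have := num_private_le_card w; rewrite inw0 cards0 addn0.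
have [x] : exists x, x \in private_out w :\ v.
  by apply/card_gt0P; move: gt1; rewrite (cardsD1 v); case: (v \in _) => /=; lia.
rewrite in_setD1 => /andP [xv xw].
by rewrite (negbTE (private_out_no_chain inv0 xw xv)) in wv.
Qed.

End PrivateColors.

Lemma private_converse n (C : arc_coloring n) v c : private (converse C) v c = private C v c.
Proof.
apply/forallP/forallP => P x; apply/forallP => y; have /forallP /(_ x) := P y;
  by rewrite /converse eq_sym orbC.
Qed.

Lemma private_in_converse n (C : arc_coloring n) v : private_in (converse C) v = private_out C v.
Proof. by apply/setP => u; rewrite !inE private_converse. Qed.

Lemma num_private_converse n (C : arc_coloring n) v :
  num_private (converse C) v = num_private C v.
Proof.
apply/perm_size/perm_undup => c; rewrite !mem_filter private_converse; congr (_ && _).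
by apply/arc_colorsP/arc_colorsP => [] [x [y [xy ->]]]; exists y, x; rewrite eq_sym.
Qed.

Lemma exists_small_num_private n (C : arc_coloring n) :
  4 <= n -> ~ has_rainbow_triangle C -> exists v, num_private C v <= n./2.
Proof.
move=> n4 nR; case: (pickP (fun v => num_private C v <= n./2)) => [v small|big].
  by exists v.
have {}big v : n./2 < num_private C v by rewrite ltnNge big.
have big2 v : 2 < num_private C v by apply: leq_trans (big v); have := half_leq n4.
set O := [set v | private_in C v == set0].
have inO v : v \in O -> num_private C v <= #|~: O|.
  rewrite inE => /eqP inv0; apply: leq_trans (num_private_le_card_in nR _ inv0) _.
    by move=> w; apply: leq_trans (big2 w).
  by apply/subset_leq_card/subsetP => w; rewrite !inE.
have notinO v : v \notin O -> num_private C v <= #|O|.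
  rewrite inE => inv; rewrite -num_private_converse.
  apply: leq_trans (num_private_le_card_in (converse_rainbow_free nR) _ _) _.
  - by move=> w; rewrite num_private_converse; apply: leq_trans (big2 w).
  - apply/eqP; rewrite private_in_converse.
    by move: (private_in_or_out_eq0 nR (big2 v)); rewrite (negbTE inv).
  apply/subset_leq_card/subsetP => w; rewrite !inE private_in_converse => outw.
  by move: (private_in_or_out_eq0 nR (big2 w)); rewrite (negbTE outw) orbF.
have nE := odd_double_half n; rewrite -addnn in nE.
have odd1 : odd n <= 1 by case: odd.
have cardO : #|O| + #|~: O| = n by rewrite cardsC card_ord.
case: (leqP #|O| n./2) => [Osmall|Obig].
  have [v] : exists v, v \in ~: O by apply/card_gt0P; lia.
  by rewrite inE => /notinO; have := big v; lia.
have [v] : exists v, v \in O by apply/card_gt0P; lia.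
by move/inO; have := big v; lia.
Qed.

Lemma num_colors_le_delete n (C : arc_coloring n.+1) v :
  num_colors C <= num_colors (relabel (lift v) C) + num_private C v.
Proof.
set D := relabel (lift v) C.
apply: leq_trans (num_colors_le_undup (s := arc_colors D ++ private_colors C v) _) _.
  move=> c cC; rewrite mem_cat mem_filter cC andbT orbC.
  case: (boolP (private C v c)) => //=.
  rewrite negb_forall => /existsP [x]; rewrite negb_forall => /existsP [y].
  rewrite negb_imply negb_or => /andP [/andP [xy /eqP <-] /andP [xv yv]].
  case: (unliftP v x) xv xy => [i ->|->]; last by rewrite eqxx.
  case: (unliftP v y) yv => [j ->|->]; last by rewrite eqxx.
  by move=> _ _; rewrite (inj_eq (@lift_inj _ v)); apply: (mem_arc_colors D).
by rewrite undup_cat size_cat leq_add2r size_filter count_size.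
Qed.

(* Ordered so that [arcs n] is a prefix of [arcs n.+1]. *)
Fixpoint arcs n : seq (nat * nat) :=
  if n is m.+1 then arcs m ++ flatten [seq [:: (i, m); (m, i)] | i <- iota 0 m] else [::].

Lemma mem_arcs n x y : ((x, y) \in arcs n) = [&& x != y, x < n & y < n].
Proof.
elim: n => [|n IH] /=; first by rewrite andbF.
rewrite mem_cat IH; apply/orP/idP => [[/and3P [xy xn yn]|/flatten_mapP [i]]|/and3P [xy xn yn]].
- lia.
- by rewrite mem_iota !inE /= => lt /orP [] /eqP [-> ->]; lia.
case: (ltnP x n) (ltnP y n) => [xn'|nx] [yn'|ny]; first by left; lia.
all: right; apply/flatten_mapP.
- by exists x; rewrite ?mem_iota // !inE; apply/orP; left; apply/eqP; congr pair; lia.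
- by exists y; rewrite ?mem_iota // !inE; apply/orP; right; apply/eqP; congr pair; lia.
- lia.
Qed.

Definition is_triangle (a b c : nat * nat) := [&& a.2 == b.1, b.2 == c.1 & c.2 == a.1].

(* Entry [k] lists the pairs [(i, j)] of earlier positions whose arcs close a
   directed triangle with the arc at position [k]. *)
Definition triangle_table (L : seq (nat * nat)) : seq (seq (nat * nat)) :=
  [seq [seq t <- [seq (i, j) | i <- iota 0 k, j <- iota 0 k]
          | is_triangle (nth (0, 0) L k) (nth (0, 0) L t.1) (nth (0, 0) L t.2)]
  | k <- iota 0 (size L)].

(* Depth-first search for a colouring of the arcs, in table order, without
   rainbow triangle, using at least [target] colours, and at least [need] colours
   on its first [p] arcs.  Colours are named 0, 1, ... in order of first
   appearance: [pre] is the colouring so far, using the [m] colours [0 .. m-1],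
   and the next arc gets an old colour or the new colour [m].  The tests are
   written with [if] rather than [&&] so that [vm_compute], which evaluates
   arguments eagerly, does not explore pruned branches. *)
Fixpoint search (T : seq (seq (nat * nat))) (target p need : nat) (pre : seq nat) (m : nat) :=
  if (target <= m + size T) && ((size pre == p) ==> (need <= m)) then
    if T is Tk :: T' then
      has (fun c => let pre' := rcons pre c in
             if all (fun t => ~~ rainbow c (nth 0 pre' t.1) (nth 0 pre' t.2)) Tk
             then search T' target p need pre' (if c == m then m.+1 else m) else false)
          (iota 0 m.+1)
    else true
  else false.

Definition rainbow_free_seq (T : seq (seq (nat * nat))) (s : seq nat) :=
  forall k i j, k < size s -> (i, j) \in nth [::] T k ->
    [/\ i < k, j < k & ~~ rainbow (nth 0 s k) (nth 0 s i) (nth 0 s j)].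

(* The distinct entries of [s] in order of first occurrence. *)
Definition first_occ (s : seq nat) := rev (undup (rev s)).

Definition canon (s : seq nat) := [seq index x (first_occ s) | x <- s].

Lemma mem_first_occ s : first_occ s =i s.
Proof. by move=> x; rewrite mem_rev mem_undup mem_rev. Qed.

Lemma size_first_occ s : size (first_occ s) = size (undup s).
Proof. by rewrite size_rev; apply/perm_size/perm_undup/mem_rev. Qed.

Lemma first_occ_rcons s x :
  first_occ (rcons s x) = if x \in s then first_occ s else rcons (first_occ s) x.
Proof. by rewrite /first_occ rev_rcons /= mem_rev; case: ifP => // _; rewrite rev_cons. Qed.

Lemma index_first_occ_rcons s x :
  index x (first_occ (rcons s x)) = if x \in s then index x (first_occ s) else size (first_occ s).
Proof.
rewrite first_occ_rcons; case: ifP => // xs.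
by rewrite -cats1 index_cat mem_first_occ xs /= eqxx addn0.
Qed.

Lemma index_first_occ_rcons_le s x : index x (first_occ (rcons s x)) <= size (first_occ s).
Proof.
by rewrite index_first_occ_rcons; case: ifP => // xs; rewrite ltnW // index_mem mem_first_occ.
Qed.

Lemma size_first_occ_rcons s x :
  size (first_occ (rcons s x)) = if index x (first_occ (rcons s x)) == size (first_occ s)
                                  then (size (first_occ s)).+1 else size (first_occ s).
Proof.
rewrite index_first_occ_rcons first_occ_rcons; case: ifP => xs; last by rewrite eqxx size_rcons.
by rewrite ltn_eqF // index_mem mem_first_occ.
Qed.

Lemma canon_rcons s x : canon (rcons s x) = rcons (canon s) (index x (first_occ (rcons s x))).
Proof.
rewrite /canon map_rcons; congr rcons; apply/eq_in_map => y ys.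
by rewrite first_occ_rcons; case: ifP => // _; rewrite -cats1 index_cat mem_first_occ ys.
Qed.

Lemma rainbow_index (D : seq nat) a b c : a \in D -> b \in D -> c \in D ->
  rainbow (index a D) (index b D) (index c D) = rainbow a b c.
Proof. by move=> aD bD cD; rewrite /rainbow !(inj_in_eq (@index_inj _ 0 D)). Qed.

Lemma search_complete T target p need (s r : seq nat) :
  size T = size (s ++ r) -> rainbow_free_seq T (s ++ r) ->
  target <= size (undup (s ++ r)) -> need <= size (undup (take p (s ++ r))) ->
  search (drop (size s) T) target p need (canon s) (size (first_occ s)).
Proof.
elim: r s => [|x r IH] s; rewrite ?cats0 => sizeT rf tgt nd.
  rewrite drop_oversize ?sizeT // /= size_first_occ addn0 tgt size_map /=.
  case: ifP => // /negP []; apply/implyP => /eqP ps.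
  by rewrite -ps take_size in nd.
have s_lt : size s < size (s ++ x :: r) by rewrite size_cat /= addnS ltnS leq_addr.
rewrite (drop_nth [::]) ?sizeT //; cbn [search].
case: ifP => [_|/negP []]; last first.
  rewrite /= size_drop sizeT size_cat /= size_first_occ size_map.
  have -> : size s + (size r).+1 - (size s).+1 = size r by lia.
  apply/andP; split; first apply: leq_trans tgt _.
    by rewrite undup_cat size_cat size_filter leq_add ?count_size ?(size_undup (x :: r)).
  by apply/implyP => /eqP ps; rewrite -ps take_size_cat in nd.
apply/hasP; exists (index x (first_occ (rcons s x))).
  by rewrite mem_iota add0n ltnS index_first_occ_rcons_le.
rewrite -canon_rcons -size_first_occ_rcons; case: ifP => [_|/negP []].
  by have := IH (rcons s x); rewrite size_rcons cat_rcons; apply.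
apply/allP => [[i j]] ijT /=; have [i_s j_s] := rf (size s) i j s_lt ijT.
rewrite !nth_cat i_s j_s ltnn subnn /canon !(nth_map 0) ?size_rcons ?ltnS 1?ltnW //.
rewrite !nth_rcons i_s j_s rainbow_index // mem_first_occ mem_rcons inE ?eqxx //.
all: by rewrite mem_nth ?orbT.
Qed.

Definition seq_colors n (C : arc_coloring n.+1) : seq nat :=
  [seq C (inord a.1) (inord a.2) | a <- arcs n.+1].

Lemma inord_eq n x y : x < n.+1 -> y < n.+1 -> (inord x == inord y :> 'I_n.+1) = (x == y).
Proof. by move=> xn yn; rewrite -val_eqE /= !inordK. Qed.

Lemma triangle_not_rainbow n (C : arc_coloring n.+1) a b c :
  ~ has_rainbow_triangle C -> a \in arcs n.+1 -> b \in arcs n.+1 -> c \in arcs n.+1 ->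
  is_triangle a b c ->
  ~~ rainbow (C (inord a.1) (inord a.2)) (C (inord b.1) (inord b.2)) (C (inord c.1) (inord c.2)).
Proof.
case: a b c => [x y] [y' z] [z' x'] nR; rewrite !mem_arcs /is_triangle /=.
move=> /and3P [xy xn yn] /and3P [yz _ zn] /and3P [zx _ _] /and3P [/eqP e1 /eqP e2 /eqP e3].
rewrite -e1 -e2 e3 in yz zx *; apply/negP => /and3P rb; apply: nR.
by exists (inord x), (inord y), (inord z); rewrite !inord_eq.
Qed.

Lemma seq_colors_rainbow_free n (C : arc_coloring n.+1) :
  ~ has_rainbow_triangle C -> rainbow_free_seq (triangle_table (arcs n.+1)) (seq_colors C).
Proof.
move=> nR k i j; rewrite size_map => kL.
rewrite (nth_map 0) ?size_iota // nth_iota // add0n mem_filter.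
case/andP => tri /allpairsP [[i' j'] [/= ik jk [ii jj]]]; subst i' j'.
move: ik jk; rewrite !mem_iota !add0n => ik jk; split => //.
have [iL jL] : i < size (arcs n.+1) /\ j < size (arcs n.+1) by lia.
by rewrite !(nth_map (0, 0)) //; apply: triangle_not_rainbow; rewrite ?mem_nth.
Qed.

Lemma num_colors_le_seq_colors n (C : arc_coloring n.+1) :
  num_colors C <= size (undup (seq_colors C)).
Proof.
apply: num_colors_le_undup => _ /arc_colorsP [x [y [xy ->]]].
by apply/mapP; exists (val x, val y); rewrite ?mem_arcs ?ltn_ord ?andbT //= !inord_val.
Qed.

Lemma num_colors_delete_last n (C : arc_coloring n.+1) :
  num_colors (relabel (lift ord_max) C) <= size (undup (take (size (arcs n)) (seq_colors C))).
Proof.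
rewrite /seq_colors /= -map_take take_size_cat //.
apply: num_colors_le_undup => _ /arc_colorsP [x [y [xy ->]]].
apply/mapP; exists (val x, val y); first by rewrite mem_arcs ?ltn_ord ?andbT.
have liftE (i : 'I_n) : lift ord_max i = inord i.
  apply: val_inj; rewrite /= inordK; first by rewrite /bump leqNgt ltn_ord.
  by rewrite ltnS ltnW.
by rewrite /relabel !liftE.
Qed.

Lemma num_colors_lt_of_search n (C : arc_coloring n.+1) target need :
  ~ has_rainbow_triangle C ->
  ~~ search (triangle_table (arcs n.+1)) target (size (arcs n)) need [::] 0 ->
  need <= num_colors (relabel (lift ord_max) C) -> num_colors C < target.
Proof.
move=> nR + nd; apply: contraNT; rewrite -leqNgt => tgt.
rewrite -[triangle_table _]drop0.
apply: (@search_complete _ _ _ _ [::] (seq_colors C)) => /=.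
- by rewrite !size_map size_iota.
- exact: seq_colors_rainbow_free.
- exact: leq_trans tgt (num_colors_le_seq_colors C).
- exact: leq_trans nd (num_colors_delete_last C).
Qed.

Lemma num_colors_K3 (C : arc_coloring 3) : ~ has_rainbow_triangle C -> num_colors C <= 4.
Proof.
by move=> nR; rewrite -ltnS; apply: (num_colors_lt_of_search (need := 0)) => //; vm_compute.
Qed.

Lemma search_K5 : ~~ search (triangle_table (arcs 5)) 8 (size (arcs 4)) 6 [::] 0.
Proof. by vm_compute. Qed.

(* Renaming vertices by the transposition of v and the last vertex lets the
   search assume that the deleted vertex is the last one. *)
Lemma num_colors_K5 (C : arc_coloring 5) : ~ has_rainbow_triangle C -> num_colors C <= 7.
Proof.
move=> nR; rewrite leqNgt; apply/negP => C8.
have [v small] := exists_small_num_private (isT : 4 <= 5) nR.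
have del6 : 6 <= num_colors (relabel (lift v) C) by have := num_colors_le_delete C v; lia.
pose s := tperm v ord_max.
have D8 : 8 <= num_colors (relabel s C).
  apply: leq_trans C8 (num_colors_relabel_le (f := id) (g := s) _ _ _) => // x.
  by rewrite /= tpermK.
pose g i := odflt ord0 (unlift ord_max (s (lift v i))).
have D6 : 6 <= num_colors (relabel (lift ord_max) (relabel s C)).
  apply: leq_trans del6 (num_colors_relabel_le (f' := s \o lift ord_max) (g := g) _ _ _).
    exact: lift_inj.
  move=> i; rewrite /g /=; case: unliftP => [j <-|E]; first by rewrite tpermK.
  by move: (neq_lift v i); rewrite -[lift v i](tpermK v ord_max) E tpermR eqxx.
have := num_colors_lt_of_search (relabel_rainbow_free (@perm_inj _ s) nR) search_K5 D6.
by rewrite ltnNge D8.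
Qed.

Definition rainbow_free_bound n := if n <= 4 then n * n %/ 4 + 2 else n * n %/ 4 + 1.

Lemma num_colors_rainbow_free n (C : arc_coloring n) :
  3 <= n -> ~ has_rainbow_triangle C -> num_colors C <= rainbow_free_bound n.
Proof.
elim: n C => [|n IH] C // n3; move: C.
have [-> | n2] := eqVneq n 2; first exact: num_colors_K3.
have [-> | n4] := eqVneq n 4; first exact: num_colors_K5.
move=> C nR; have [v small] : exists v, num_private C v <= n.+1./2.
  by apply: exists_small_num_private => //; lia.
have IHv := IH _ (ltac:(lia) : 3 <= n) (relabel_rainbow_free (@lift_inj _ v) nR).
apply: leq_trans (num_colors_le_delete C v) _.
have sq : n * n %/ 4 + n.+1./2 = n.+1 * n.+1 %/ 4 by nia.
move: sq IHv small; rewrite /rainbow_free_bound.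
move: (n * n %/ 4) (n.+1 * n.+1 %/ 4) (n.+1./2) (num_colors _) (num_private C v) => a b h c p.
by case: ifP; case: ifP; lia.
Qed.

Unset Implicit Arguments.

Definition nat_coloring n (c : nat -> nat -> nat) : arc_coloring n := fun x y => c x y.

Lemma nat_coloring_rainbow_free n c :
  all (fun x => all (fun y => all (fun z =>
    ~~ [&& x != y, y != z, z != x & rainbow (c x y) (c y z) (c z x)])
    (iota 0 n)) (iota 0 n)) (iota 0 n) ->
  ~ has_rainbow_triangle (nat_coloring n c).
Proof.
have mem (i : 'I_n) : val i \in iota 0 n by rewrite mem_iota ltn_ord.
move/allP => chk [x [y [z [xy yz zx [c1 c2 c3]]]]].
move: chk => /(_ _ (mem x)) /allP /(_ _ (mem y)) /allP /(_ _ (mem z)).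
by rewrite xy yz zx /rainbow c1 c2 c3.
Qed.

Lemma nat_coloring_num_colors n c :
  size (undup [seq c a.1 a.2 | a <- arcs n]) <= num_colors (nat_coloring n c).
Proof.
apply: size_le_num_colors (undup_uniq _) _ => d.
rewrite mem_undup => /mapP [[x y]]; rewrite mem_arcs => /and3P [xy xn yn] ->.
exact: (mem_arc_colors (nat_coloring n c) (x := Ordinal xn) (y := Ordinal yn)).
Qed.

Definition K3_coloring := nat_coloring 3 (fun x y =>
  nth 0 (nth [::] [:: [:: 0; 0; 2]; [:: 3; 0; 0]; [:: 1; 2; 0]] x) y).

Definition K4_coloring := nat_coloring 4 (fun x y =>
  nth 0 (nth [::] [:: [:: 0; 0; 1; 2]; [:: 1; 0; 3; 0]; [:: 0; 4; 0; 1]; [:: 5; 1; 0; 0]] x) y).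

Definition bipartite_coloring n := nat_coloring n (fun x y =>
  if (x < n./2) && (n./2 <= y) then (x * n + y).+1 else 0).

Lemma bipartite_rainbow_free n : ~ has_rainbow_triangle (bipartite_coloring n).
Proof.
move=> [x [y [z [_ _ _]]]]; rewrite /bipartite_coloring /nat_coloring.
by do 3 case: ifP => /andP ? ; rewrite ?eqxx; case; lia.
Qed.

Lemma bipartite_num_colors n : 2 <= n -> n * n %/ 4 + 1 <= num_colors (bipartite_coloring n).
Proof.
move=> n2; have := odd_double_half n; rewrite -addnn; set h := n./2 => nE.
have odd1 : odd n <= 1 by case: odd.
have [h0 hn] : 0 < h /\ h < n by lia.
set l := [seq (x * n + y).+1 | x <- iota 0 h, y <- iota h (n - h)].
have -> : n * n %/ 4 + 1 = size (0 :: l).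
  by rewrite /= size_allpairs !size_iota addn1; congr _.+1; nia.
have lE d : d \in l -> exists x y, [/\ x < h, h <= y, y < n & d = (x * n + y).+1].
  by case/allpairsP => [[x y] [/=]]; rewrite !mem_iota => ? ? ->; exists x, y; split; lia.
apply: size_le_num_colors => [|d].
  rewrite cons_uniq allpairs_uniq ?iota_uniq ?andbT //.
    by apply/negP => /lE [x [y [_ _ _]]].
  move=> [x1 y1] [x2 y2] /allpairsP [[a b] [_ b_n [-> ->]]].
  move=> /allpairsP [[c e] [_ e_n [-> ->]]] /= [E].
  move: b_n e_n; rewrite !mem_iota /= => b_n e_n.
  have := congr1 (divn^~ n) E; have := congr1 (modn^~ n) E.
  rewrite /= !modnMDl !divnMDl ?modn_small ?divn_small; try lia.
  by rewrite !addn0 => -> ->.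
rewrite in_cons => /orP [/eqP ->|/lE [x [y [xh hy yn ->]]]].
  have := mem_arc_colors (bipartite_coloring n) (x := Ordinal hn) (y := Ordinal (ltn_trans h0 hn)).
  by rewrite /bipartite_coloring /nat_coloring /= ltnn; apply; rewrite -val_eqE /= -lt0n.
have xn : x < n by lia.
have := mem_arc_colors (bipartite_coloring n) (x := Ordinal xn) (y := Ordinal yn).
by rewrite /bipartite_coloring /nat_coloring /= xh hy; apply; rewrite -val_eqE /=; lia.
Qed.

Lemma exists_rainbow_free n : 3 <= n ->
  exists2 C : arc_coloring n, ~ has_rainbow_triangle C & rainbow_free_bound n <= num_colors C.
Proof.
case: n => [|[|[|[|[|n]]]]] // _.
- exists K3_coloring; first by apply: nat_coloring_rainbow_free; vm_compute.
  by apply: leq_trans (nat_coloring_num_colors _ _); vm_compute.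
- exists K4_coloring; first by apply: nat_coloring_rainbow_free; vm_compute.
  by apply: leq_trans (nat_coloring_num_colors _ _); vm_compute.
exists (bipartite_coloring _); first exact: bipartite_rainbow_free.
exact: bipartite_num_colors.
Qed.

Theorem theorem1 (n : nat) : 3 <= n ->
  is_f_Kn n (if n <= 4 then (n * n) %/ 4 + 3 else (n * n) %/ 4 + 2).
Proof.
move=> n3; have -> : (if n <= 4 then n * n %/ 4 + 3 else n * n %/ 4 + 2) =
                    (rainbow_free_bound n).+1.
  by rewrite /rainbow_free_bound; case: ifP; rewrite addnS.
split=> [C Cbig | j force].
  case: (rainbow_triangleP C) => [//|nR].
  by have := num_colors_rainbow_free n3 nR; rewrite leqNgt Cbig.
have [C nR Cbound] := exists_rainbow_free n n3.
rewrite leqNgt ltnS; apply/negP => jsmall; apply: nR (force C _).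
exact: leq_trans jsmall Cbound.
Qed.
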